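(* Let $V$ be a real vector space of dimension $d$, and $G$ a group of affine-linear transformations of $V$ including all translations. Then the dilation component $\rho_0\colon\mathcal{CB}(V,G)\to\mathcal{CB}(V,G)$ is a group homomorphism, and the dilation components $\rho_1,\ldots,\rho_d\colon[0,\infty)\times\mathcal{CB}(V,G)\to\mathcal{CB}(V,G)$ are group homomorphisms in their second variable.
   Context: $\mathcal{K}(V)$ is the set of nonempty compact convex subsets of $V$ with the Hausdorff metric topology. $\mathcal{CB}(V,G)$ is the quotient (with quotient topology) of the free Hausdorff topological abelian group $\mathbb{Z}\mathcal{K}(V)$ on $\mathcal{K}(V)$ (the Hausdorff topological abelian group with continuous map $X\mapsto[X]$ through which every continuous map from $\mathcal{K}(V)$ to a Hausdorff topological abelian group factors uniquely via a continuous homomorphism) by the closure of the subgroup generated by all $[B\cup C]-[B]-[C]+[B\cap C]$ ($B,C,B\cup C\in\mathcal{K}(V)$) and all $[X]-[gX]$ ($g\in G$); images are still written $[X]$. The dilation map $D\colon[0,\infty)\times\mathcal{CB}(V,G)\to\mathcal{CB}(V,G)$ is the unique continuous map that is a homomorphism in its second variable with $D(\lambda,[X])=[\lambda X]$. The dilation components are the uniquely determined continuous maps $\rho_0\colon\mathcal{CB}(V,G)\to\mathcal{CB}(V,G)$ and $\rho_1,\ldots,\rho_d\colon[0,\infty)\times\mathcal{CB}(V,G)\to\mathcal{CB}(V,G)$ such that each $\rho_i(-,x)$ ($i\geqslant1$) is a semigroup homomorphism $([0,\infty),+)\to\mathcal{CB}(V,G)$ and $D(\lambda,x)=\rho_0(x)+\rho_1(\lambda^1,x)+\cdots+\rho_d(\lambda^d,x)$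 for all $\lambda\in[0,\infty)$, $x\in\mathcal{CB}(V,G)$. *)

From HB Require Import structures.
From mathcomp Require Import all_boot all_order all_algebra.
From mathcomp Require Import all_classical all_reals all_analysis.
Set Implicit Arguments. Unset Strict Implicit. Unset Printing Implicit Defensive.
Import Order.TTheory GRing.Theory Num.Theory.
Import numFieldNormedType.Exports.
Local Open Scope classical_set_scope.
Local Open Scope ring_scope.

(** The ambient space V = R^d (row vectors, with its normed-space structure). *)
Notation Vsp R d := ('rV[R]_d).

Definition isK (R : realType) (d : nat) (X : set (Vsp R d)) : Prop :=
  X !=set0 /\ compact X /\ convex_set (X : set (convex_lmodType (Vsp R d))).

Definition pt_dist (R : realType) (d : nat) (x : Vsp R d) (Y : set (Vsp R d)) : R :=
  inf [set `|x - y| | y in Y].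

Definition hausdorff_dist (R : realType) (d : nat) (X Y : set (Vsp R d)) : R :=
  Num.max (sup [set pt_dist x Y | x in X]) (sup [set pt_dist y X | y in Y]).

Definition Kcontinuous (R : realType) (d : nat) (T : topologicalType)
    (f : set (Vsp R d) -> T) : Prop :=
  forall X, isK X -> forall U, nbhs (f X) U ->
    exists2 e : R, 0 < e & forall Y, isK Y -> hausdorff_dist X Y < e -> U (f Y).

Definition affine_map (R : realType) (d : nat) (g : Vsp R d -> Vsp R d) : Prop :=
  exists (A : 'M[R]_d) (b : Vsp R d), A \in unitmx /\ forall x, g x = x *m A + b.

Definition affine_group_with_translations (R : realType) (d : nat)
    (G : set (Vsp R d -> Vsp R d)) : Prop :=
  [/\ (forall g, G g -> affine_map g),
      G id,
      (forall g h, G g -> G h -> G (g \o h)),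
      (forall g, G g -> exists2 h, G h & (h \o g = id /\ g \o h = id)) &
      (forall b : Vsp R d, G (fun x => x + b))].

Definition free_haus_top_ab_group (R : realType) (d : nat) (F : topologicalZmodType)
    (iota : set (Vsp R d) -> F) : Prop :=
  [/\ hausdorff_space F,
      Kcontinuous iota &
      forall (A : topologicalZmodType), hausdorff_space A ->
      forall f : set (Vsp R d) -> A, Kcontinuous f ->
        exists phi : {additive F -> A},
          [/\ continuous phi,
              (forall X, isK X -> phi (iota X) = f X) &
              forall phi' : {additive F -> A}, continuous phi' ->
                (forall X, isK X -> phi' (iota X) = f X) -> forall z, phi' z = phi z]].

Definition CB_relations (R : realType) (d : nat) (G : set (Vsp R d -> Vsp R d))
    (F : zmodType) (iota : set (Vsp R d) -> F) : set F :=
  [set z | (exists B C, [/\ isK B, isK C, isK (B `|` C) &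
              z = iota (B `|` C) - iota B - iota C + iota (B `&` C)])
        \/ (exists X g, [/\ isK X, G g & z = iota X - iota (g @` X)])].

Definition gen_subgroup (F : zmodType) (S : set F) : set F :=
  [set z | forall H : set F, H 0 -> (forall x y, H x -> H y -> H (x - y)) ->
             S `<=` H -> H z].

Definition is_CB_quotient (R : realType) (d : nat) (G : set (Vsp R d -> Vsp R d))
    (F : topologicalZmodType) (iota : set (Vsp R d) -> F)
    (Q : topologicalZmodType) (pi : {additive F -> Q}) : Prop :=
  [/\ (forall q : Q, exists z, pi z = q),
      (forall z, pi z = 0 <-> closure (gen_subgroup (CB_relations G iota)) z) &
      (forall U : set Q, open U <-> open (pi @^-1` U))].

Definition dilate (R : realType) (d : nat) (l : R) (X : set (Vsp R d)) : set (Vsp R d) :=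
  [set l *: x | x in X].

From HB Require Import structures.
From mathcomp Require Import all_boot all_order all_algebra.
From mathcomp Require Import all_classical all_reals all_analysis.
Import Order.TTheory GRing.Theory Num.Theory.
Import numFieldNormedType.Exports.

Set Implicit Arguments.
Unset Strict Implicit.
Unset Printing Implicit Defensive.
Local Open Scope classical_set_scope.
Local Open Scope ring_scope.

(** Only the algebraic hypotheses matter.  For fixed [x], [y] the defects
    [t |-> rho i t (x + y) - rho i t x - rho i t y] are additive on [[0, oo)],
    and additivity of [D l] together with the expansion of [D] gives
    [\sum_i defect_i (l ^+ i) = 0] for all [l >= 0].  An additive family
    [f_1, ..., f_k] on [[0, oo)] with [\sum_i f_i (l ^+ i) = 0] vanishes:
    comparing the identity at [l] and [2 l] eliminates [f_k], so by induction
    some positive multiple of each lower [f_i] vanishes, hence [f_i] itself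
    since [f_i t = f_i (t / m) *+ m]; then [f_k (l ^+ k) = 0] and every
    [t >= 0] is a [k]-th power.  At [l = 0] the expansion reads [D 0 = rho0],
    which gives additivity of [rho0]. *)

Lemma nneg_root_exists (R : realType) (t : R) (k : nat) : 0 <= t -> (0 < k)%N ->
  exists2 l : R, 0 <= l & l ^+ k = t.
Proof.
move=> t_ge0 k_gt0; exists (t `^ k%:R^-1); first exact: powR_ge0.
rewrite -powR_mulrn ?powR_ge0 // -powRrM mulVf ?powRr1 //.
by rewrite pnatr_eq0 -lt0n.
Qed.

Definition nneg_additive (R : realType) (Q : zmodType) (f : R -> Q) :=
  forall s t, 0 <= s -> 0 <= t -> f (s + t) = f s + f t.

Section NonnegAdditive.
Variables (R : realType) (Q : zmodType).
Implicit Types (f g : R -> Q) (s t : R).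

Lemma nneg_additiveB f g : nneg_additive f -> nneg_additive g ->
  nneg_additive (f \- g).
Proof.
by move=> f_add g_add s t s_ge0 t_ge0 /=; rewrite f_add // g_add // opprD addrACA.
Qed.

Lemma nneg_additiveMn f m : nneg_additive f -> nneg_additive (fun t => f t *+ m).
Proof. by move=> f_add s t s_ge0 t_ge0; rewrite f_add // mulrnDl. Qed.

Variables (f : R -> Q) (f_add : nneg_additive f).

Lemma nneg_additive0 : f 0 = 0.
Proof. by apply: (@addrI _ (f 0)); rewrite -f_add ?addr0. Qed.

Lemma nneg_additive_mulrn t m : 0 <= t -> f (t *+ m) = f t *+ m.
Proof.
move=> t_ge0; elim: m => [|m IHm]; first by rewrite !mulr0n nneg_additive0.
by rewrite !mulrS f_add ?IHm // mulrn_wge0.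
Qed.

Lemma nneg_additive_eq0_mulrn m : (0 < m)%N ->
  (forall t, 0 <= t -> f t *+ m = 0) -> forall t, 0 <= t -> f t = 0.
Proof.
move=> m_gt0 fm0 t t_ge0.
have m_neq0 : m%:R != 0 :> R by rewrite pnatr_eq0 -lt0n.
have tm_ge0 : 0 <= t / m%:R by rewrite divr_ge0 ?ler0n.
by rewrite -(divfK m_neq0 t) mulr_natr nneg_additive_mulrn // fm0.
Qed.

End NonnegAdditive.

Lemma powers_sum_elim_top (R : realType) (Q : zmodType) (k : nat)
    (f : nat -> R -> Q) :
  (forall i, (1 <= i <= k.+1)%N -> nneg_additive (f i)) ->
  (forall l, 0 <= l -> \sum_(1 <= i < k.+2) f i (l ^+ i) = 0) ->
  forall l, 0 <= l -> \sum_(1 <= i < k.+1) f i (l ^+ i) *+ (2 ^ k.+1 - 2 ^ i) = 0.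
Proof.
move=> f_add f_sum l l_ge0.
have [l2_ge0 lexp_ge0] : 0 <= l *+ 2 /\ forall i, 0 <= l ^+ i.
  by split=> [|i]; rewrite ?mulrn_wge0 ?exprn_ge0.
have f_double i : (1 <= i <= k.+1)%N -> f i ((l *+ 2) ^+ i) = f i (l ^+ i) *+ 2 ^ i.
  by move=> i_range; rewrite exprMn_n nneg_additive_mulrn //; apply: f_add.
have -> : \sum_(1 <= i < k.+1) f i (l ^+ i) *+ (2 ^ k.+1 - 2 ^ i)
    = \sum_(1 <= i < k.+2) (f i (l ^+ i) *+ 2 ^ k.+1 - f i (l ^+ i) *+ 2 ^ i).
  rewrite [RHS]big_nat_recr //= subrr addr0.
  by apply: eq_big_nat => i /andP[_ i_lt]; rewrite mulrnBr // leq_pexp2l // ltnW.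
rewrite sumrB sumrMnl f_sum // mul0rn sub0r.
have -> : \sum_(1 <= i < k.+2) f i (l ^+ i) *+ 2 ^ i
    = \sum_(1 <= i < k.+2) f i ((l *+ 2) ^+ i).
  by apply: eq_big_nat => i i_range; apply/esym/f_double.
by rewrite f_sum ?oppr0.
Qed.

Lemma nneg_additive_powers_sum_eq0 (R : realType) (Q : zmodType) (k : nat)
    (f : nat -> R -> Q) :
  (forall i, (1 <= i <= k)%N -> nneg_additive (f i)) ->
  (forall l, 0 <= l -> \sum_(1 <= i < k.+1) f i (l ^+ i) = 0) ->
  forall i, (1 <= i <= k)%N -> forall t, 0 <= t -> f i t = 0.
Proof.
elim: k f => [|k IHk] f f_add f_sum; first by case=> [|[]].
pose g i t := f i t *+ (2 ^ k.+1 - 2 ^ i).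
have g_add j : (1 <= j <= k)%N -> nneg_additive (g j).
  move=> /andP[j_ge1 le_jk]; apply: nneg_additiveMn; apply: f_add.
  by rewrite j_ge1 leqW.
have f_low i : (1 <= i <= k)%N -> forall t, 0 <= t -> f i t = 0.
  move=> /andP[i_ge1 le_ik].
  have fi_add : nneg_additive (f i) by apply: f_add; rewrite i_ge1 leqW.
  have weight_gt0 : (0 < 2 ^ k.+1 - 2 ^ i)%N by rewrite subn_gt0 ltn_exp2l.
  apply: (nneg_additive_eq0_mulrn fi_add weight_gt0) => t t_ge0.
  rewrite -/(g i t); apply: (IHk g g_add (powers_sum_elim_top f_add f_sum)) => //.
  by rewrite i_ge1.
move=> i /andP[i_ge1]; rewrite leq_eqVlt ltnS => /orP[/eqP -> | le_ik] t t_ge0;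
  last by apply: f_low; rewrite ?i_ge1.
have [l l_ge0 <-] := nneg_root_exists t_ge0 (ltn0Sn k).
have := f_sum l l_ge0; rewrite big_nat_recr //= big_nat_cond big1 ?add0r //.
move=> j /andP[/andP[j_ge1 j_lt] _].
by apply: (f_low j _ _ (exprn_ge0 j l_ge0)); rewrite j_ge1 -ltnS.
Qed.

Theorem proposition6p3 (R : realType) (d : nat) (G : set ('rV[R]_d -> 'rV[R]_d))
  (F : topologicalZmodType) (iota : set 'rV[R]_d -> F)
  (Q : topologicalZmodType) (pi : {additive F -> Q})
  (D : R -> Q -> Q) (rho0 : Q -> Q) (rho : nat -> R -> Q -> Q) :
  affine_group_with_translations G ->
  free_haus_top_ab_group iota ->
  is_CB_quotient G iota pi ->
  (* the dilation map *)
  {within [set p : R * Q | 0 <= p.1], continuous (fun p : R * Q => D p.1 p.2)} ->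
  (forall l, 0 <= l -> forall x y, D l (x + y) = D l x + D l y) ->
  (forall l, 0 <= l -> forall X, isK X -> D l (pi (iota X)) = pi (iota (dilate l X))) ->
  (* the dilation components *)
  continuous rho0 ->
  (forall i, (1 <= i <= d)%N ->
     {within [set p : R * Q | 0 <= p.1], continuous (fun p : R * Q => rho i p.1 p.2)}) ->
  (forall i, (1 <= i <= d)%N -> forall x a b, 0 <= a -> 0 <= b ->
     rho i (a + b) x = rho i a x + rho i b x) ->
  (forall l, 0 <= l -> forall x,
     D l x = rho0 x + \sum_(1 <= i < d.+1) rho i (l ^+ i) x) ->
  (* conclusion *)
  (forall x y, rho0 (x + y) = rho0 x + rho0 y) /\
  (forall i, (1 <= i <= d)%N -> forall l, 0 <= l -> forall x y,
     rho i l (x + y) = rho i l x + rho i l y).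
Proof.
move=> _ _ _ _ D_add _ _ _ rho_add D_expand.
have rho_nneg_add i x : (1 <= i <= d)%N -> nneg_additive (rho i ^~ x).
  by move=> i_range s t; apply: rho_add.
have D0 x : D 0 x = rho0 x.
  rewrite D_expand // big_nat_cond big1 ?addr0 // => i /andP[/andP[i_ge1 i_lt] _].
  have i_range : (1 <= i <= d)%N by rewrite i_ge1 -ltnS.
  by rewrite expr0n gtn_eqF // (nneg_additive0 (rho_nneg_add i x i_range)).
have rho0_add x y : rho0 (x + y) = rho0 x + rho0 y by rewrite -!D0 D_add.
split=> // i i_range l l_ge0 x y.
apply/eqP; rewrite -subr_eq0 opprD addrA; apply/eqP.
pose defect j := rho j ^~ (x + y) \- rho j ^~ x \- rho j ^~ y.
apply: (@nneg_additive_powers_sum_eq0 R Q d defect) => // [j j_range|l' l'_ge0].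
  have rho_j z := rho_nneg_add j z j_range.
  exact: nneg_additiveB (nneg_additiveB (rho_j (x + y)) (rho_j x)) (rho_j y).
have := D_add l' l'_ge0 x y; rewrite !D_expand // rho0_add !sumrB.
by rewrite addrACA => /addrI ->; rewrite -addrA -opprD subrr.
Qed.
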